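(* Let $\mathcal F$ be a filtration sequence, $E=(E_{m,n})_{m,n\in\mathbb N}$ a nonnegative process adapted to $\mathcal F$, and $r$ an extended integer sequence. Then the following two conditions are equivalent: (a) for every $\tau=(\tau_m)_{m\in\mathbb N}\in\mathcal T_{\mathrm{fin}}(r,\mathcal F,\mathcal P)$, $\limsup_{m\to\infty}\sup_{P\in\mathcal P}\mathbb E_P[E_{m,\tau_m}]\le 1$; (b) $\limsup_{m\to\infty}\sup_{\tau\in\mathcal T_{\mathrm{fin}}(r_m,\mathcal F_{m,\bullet},\mathcal P)}\sup_{P\in\mathcal P}\mathbb E_P[E_{m,\tau}]\le 1$. Moreover, if they hold, there exists $m_0\in\mathbb N$ such that $\sup_{P\in\mathcal P}\mathbb E_P[E_{m,n}]<\infty$ for all $m\ge m_0$ and all $n\in\mathbb N$ with $n\le r_m$; in particular such $E_{m,n}$ are $P$-integrable for every $P\in\mathcal P$.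
   Context: $(\Omega,\mathcal A)$ is a measurable space and $\mathcal P$ a set of probability measures on it. $\mathbb N=\{0,1,\dots\}$; an extended integer is an element of $\mathbb N\cup\{\infty\}$. Nonnegative random variables take values in $[0,\infty]$ with $\mathbb E_P[X]:=\infty$ if not $P$-integrable. A filtration sequence is a family $(\mathcal F_{m,n})_{m,n\in\mathbb N}$ of sub-$\sigma$-algebras of $\mathcal A$ such that each $\mathcal F_{m,\bullet}$ is a filtration; adapted means $E_{m,n}$ is $\mathcal F_{m,n}$-measurable. For a filtration $\mathcal G$ and $\rho\in\mathbb N\cup\{\infty\}$, $\mathcal T(\rho,\mathcal G,\mathcal P)$ is the set of $\mathcal G$-stopping times $\tau$ (values in $\mathbb N\cup\{\infty\}$) with $P[\tau\le\rho]=1$ for all $P\in\mathcal P$, and $\mathcal T_{\mathrm{fin}}(\rho,\mathcal G,\mathcal P)$ is its subset of stopping times with $\tau(\omega)<\infty$ for every $\omega\in\Omega$. $\mathcal T_{\mathrm{fin}}(r,\mathcal F,\mathcal P)$ is the set of sequences $(\tau_m)_{m}$ with $\tau_m\in\mathcal T_{\mathrm{fin}}(r_m,\mathcal F_{m,\bullet},\mathcal P)$ for all $m$. *)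

From HB Require Import structures.
From mathcomp Require Import all_boot all_order all_algebra.
From mathcomp Require Import all_classical all_reals all_analysis.
From mathcomp Require Import measurable_realfun.
Set Implicit Arguments. Unset Strict Implicit. Unset Printing Implicit Defensive.
Import Order.TTheory GRing.Theory Num.Theory.
Local Open Scope classical_set_scope.
Local Open Scope ring_scope.

(** Extended integers N ∪ {∞}: [Some n] is n, [None] is ∞. *)
Definition ext_nat := option nat.
Definition ext_le (n : nat) (r : ext_nat) : Prop :=
  match r with Some k => (n <= k)%N | None => True end.

Section defs.
Context {d : measure_display} {Omega : measurableType d} {R : realType}.

Definition is_filtration (G : nat -> set (set Omega)) : Prop :=
  (forall n, sigma_algebra setT (G n)) /\
  (forall n, G n `<=` measurable) /\
  (forall n, G n `<=` G n.+1).

Definition is_filtration_seq (F : nat -> nat -> set (set Omega)) : Prop :=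
  forall m, is_filtration (F m).

Definition G_measurable (G : set (set Omega)) (X : Omega -> \bar R) : Prop :=
  forall A : set (\bar R), measurable A -> G (X @^-1` A).

Definition nonneg_adapted (F : nat -> nat -> set (set Omega))
    (E : nat -> nat -> Omega -> \bar R) : Prop :=
  (forall m n w, (0 <= E m n w)%E) /\
  (forall m n, G_measurable (F m n) (E m n)).

(** Finite-valued (everywhere) G-stopping times, i.e. elements of
    T_fin(rho, G, P): {tau <= n} in G n for all n, and P[tau <= rho] = 1
    for every P in Pset. *)
Definition is_fin_stopping_time (rho : ext_nat) (G : nat -> set (set Omega))
    (Pset : set (probability Omega R)) (tau : Omega -> nat) : Prop :=
  (forall n, G n [set w | (tau w <= n)%N]) /\
  (forall P, Pset P -> P [set w | ext_le (tau w) rho] = 1%E).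

(** sup_{P in Pset} E_P[X] for a nonnegative X (the integral is +oo if X
    is not P-integrable). *)
Definition supE (Pset : set (probability Omega R)) (X : Omega -> \bar R)
    : \bar R :=
  ereal_sup [set (\int[P]_w X w)%E | P in Pset].

End defs.

From HB Require Import structures.
From mathcomp Require Import all_boot all_order all_algebra.
From mathcomp Require Import all_classical all_reals all_analysis.
From mathcomp Require Import measurable_realfun.
Import Order.TTheory GRing.Theory Num.Theory.
Local Open Scope classical_set_scope.
Local Open Scope ereal_scope.

(* (b) => (a) because each [tau m] is one of the stopping times over which
   the m-th supremum in (b) ranges.  (a) => (b) by countable choice: if the
   limsup in (b) exceeded some [c > 1], one could pick for every m a stopping
   time whose value exceeds [c] whenever the m-th supremum does, and this
   sequence would violate (a).  Deterministic times [n <= r m] are admissible,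
   so [sup_P E_P[E m n]] is bounded by the m-th term of (b), which is
   eventually finite. *)

Section limn_esup_facts.
Context {R : realType}.
Implicit Types (u v : (\bar R)^nat).

Lemma limn_esupE u : limn_esup u = ereal_inf (range (esups u)).
Proof. by rewrite limn_esup_lim; apply: cvg_lim => //; exact: cvg_esups_inf. Qed.

Lemma le_limn_esup u v : (forall n, u n <= v n) -> limn_esup u <= limn_esup v.
Proof.
move=> uv; rewrite !limn_esupE; apply: le_ereal_inf_tmp => _ [n _ <-].
apply: (@le_trans _ _ (esups u n)); first by apply: ereal_inf_lbound; exists n.
apply: ge_ereal_sup => _ [k /= nk <-]; apply: (le_trans (uv k)).
by apply: ereal_sup_ubound; exists k.
Qed.

Lemma limn_esup_ge_often u c :
  (forall N, exists2 k, (N <= k)%N & c < u k) -> c <= limn_esup u.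
Proof.
move=> often; rewrite limn_esupE; apply: le_ereal_inf_tmp => _ [N _ <-].
have [k Nk ck] := often N; apply: (le_trans (ltW ck)).
by apply: ereal_sup_ubound; exists k.
Qed.

Lemma limn_esup_gt_often u c :
  c < limn_esup u -> forall N, exists2 k, (N <= k)%N & c < u k.
Proof.
rewrite limn_esupE => cu N.
have : c < esups u N by apply: (lt_le_trans cu); apply: ereal_inf_lbound; exists N.
by move=> /ereal_sup_gt [_ [k /= Nk <-]] ck; exists k.
Qed.

Lemma limn_esup_lt_eventually {u c} :
  limn_esup u < c -> exists N, forall k, (N <= k)%N -> u k < c.
Proof.
rewrite limn_esupE => /ereal_inf_lt [_ [N _ <-]] uc; exists N => k Nk.
by apply: le_lt_trans uc; apply: ereal_sup_ubound; exists k.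
Qed.

Lemma lte_fin_dense (c : R) (x : \bar R) :
  c%:E < x -> exists2 c' : R, (c < c')%R & c'%:E < x.
Proof.
case: x => [x||] //= cx; last by exists (c + 1)%R; rewrite ?ltrDl ?ltey.
by exists ((c + x) / 2)%R; rewrite ?lte_fin midf_lt// -lte_fin.
Qed.

Lemma limn_esup_sup_selectionP (T : Type) (A : nat -> set T)
    (f : nat -> T -> \bar R) (c : R) :
  (forall m, A m !=set0) ->
  (forall t : nat -> T, (forall m, A m (t m)) ->
     limn_esup (fun m => f m (t m)) <= c%:E) <->
  limn_esup (fun m => ereal_sup (f m @` A m)) <= c%:E.
Proof.
move=> A0; split=> [sel|supc t At]; last first.
  apply: le_trans supc; apply: le_limn_esup => m.
  by apply: ereal_sup_ubound; exists (t m).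
rewrite leNgt; apply/negP => /lte_fin_dense [c' cc' /limn_esup_gt_often often].
pose good m x := A m x /\
  (c'%:E < ereal_sup (f m @` A m) -> c'%:E < f m x).
have [t tP] : {t : nat -> T & forall m, good m (t m)}.
  apply: choice => m.
  have [/ereal_sup_gt [_ [x Ax <-] c'x]|no_gt] :=
    pselect (c'%:E < ereal_sup (f m @` A m)); first by exists x.
  by have [x Ax] := A0 m; exists x; split=> // /no_gt.
have := sel t (fun m => (tP m).1); apply/negP; rewrite -ltNge.
apply: (@lt_le_trans _ _ c'%:E); first by rewrite lte_fin.
apply: limn_esup_ge_often => N; have [k Nk ck] := often N.
by exists k => //; exact: (tP k).2.
Qed.

End limn_esup_facts.

Section admissible_times.
Context {d : measure_display} {Omega : measurableType d} {R : realType}.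
Implicit Types (Pset : set (probability Omega R)) (G : nat -> set (set Omega)).

Lemma is_fin_stopping_time_cst Pset G rho n :
  is_filtration G -> ext_le n rho ->
  is_fin_stopping_time rho G Pset (fun _ : Omega => n).
Proof.
move=> [sG _] n_rho; split=> [k|P _] /=.
  have [G0 GC _] := sG k.
  have [nk|nk] := leqP n k.
    rewrite (_ : [set _ | true] = setT); last by apply/seteqP; split.
    by rewrite -(setD0 setT); exact: GC.
  by rewrite (_ : [set _ | false] = set0) //; apply/seteqP; split.
rewrite (_ : [set _ | ext_le n rho] = setT); last by apply/seteqP; split.
exact: probability_setT.
Qed.

Lemma G_measurable_measurable_fun (G : set (set Omega)) (X : Omega -> \bar R) :
  G `<=` measurable -> G_measurable G X -> measurable_fun setT X.
Proof. by move=> Gm GX _ Y mY; rewrite setTI; exact/Gm/GX. Qed.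

Lemma integrable_supE_lt_pinfty Pset (X : Omega -> \bar R)
    (P : probability Omega R) :
  Pset P -> measurable_fun setT X -> (forall w, 0 <= X w) ->
  supE Pset X < +oo -> P.-integrable setT X.
Proof.
move=> PP mX X0 Xfin; apply/integrableP; split => //.
under eq_integral do rewrite gee0_abs//.
by apply: le_lt_trans Xfin; apply: ereal_sup_ubound; exists P.
Qed.

End admissible_times.

Theorem mainTheorem3 (d : measure_display) (Omega : measurableType d)
  (R : realType) (Pset : set (probability Omega R))
  (F : nat -> nat -> set (set Omega)) (E : nat -> nat -> Omega -> \bar R)
  (r : nat -> ext_nat) :
  is_filtration_seq F ->
  nonneg_adapted F E ->
  let cond_a :=
    forall tau : nat -> Omega -> nat,
      (forall m, is_fin_stopping_time (r m) (F m) Pset (tau m)) ->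
      limn_esup (fun m => supE Pset (fun w => E m (tau m w) w)) <= 1 in
  let cond_b :=
    limn_esup (fun m =>
      ereal_sup [set supE Pset (fun w => E m (t w) w) |
                 t in [set t : Omega -> nat |
                         is_fin_stopping_time (r m) (F m) Pset t]]) <= 1 in
  (cond_a <-> cond_b) /\
  (cond_a ->
   exists m0 : nat, forall m n : nat, (m0 <= m)%N -> ext_le n (r m) ->
     supE Pset (E m n) < +oo /\
     (forall P : probability Omega R, Pset P -> P.-integrable setT (E m n))).
Proof.
move=> hF [E0 Em] cond_a cond_b.
have cst_stop m n : ext_le n (r m) ->
    is_fin_stopping_time (r m) (F m) Pset (fun _ => n).
  exact: is_fin_stopping_time_cst.
have ab : cond_a <-> cond_b.
  apply: (@limn_esup_sup_selectionP _ _
    (fun m t => is_fin_stopping_time (r m) (F m) Pset t)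
    (fun m t => supE Pset (fun w => E m (t w) w)) 1%R) => m.
  by exists (fun _ => 0%N); apply: cst_stop; case: (r m).
split=> // /ab hb.
have [m0 sup_fin] := limn_esup_lt_eventually (le_lt_trans hb (ltey 1)).
exists m0 => m n m0m n_rm.
have supE_fin : supE Pset (E m n) < +oo.
  apply: le_lt_trans (sup_fin m m0m); apply: ereal_sup_ubound.
  by exists (fun _ => n) => //; exact: cst_stop.
split=> // P PP; apply: integrable_supE_lt_pinfty PP _ (E0 m n) supE_fin.
by apply: G_measurable_measurable_fun (Em m n); case: (hF m) => _ [].
Qed.
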